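(* For $d>0$ let $g_d$ be as in the context, let $h_d(x)=g_d(x)/\sqrt{1-x^2}$, $M(x)=e^{x/d}$, and $$c_2(d)=\frac{\int_0^\pi\cos\theta\,\sin^2\theta\,h_d(\cos\theta)M(\cos\theta)\sin\theta\,d\theta}{\int_0^\pi\sin^2\theta\,h_d(\cos\theta)M(\cos\theta)\sin\theta\,d\theta}.$$ Then $c_2(d)=\frac{1}{6d}+o\!\left(\frac1d\right)$ as $d\to+\infty$.
   Context: $g_d$ is the unique solution in $V=\{g:\ (1-x^2)^{-1/2}g\in L^2(-1,1),\ (1-x^2)^{1/2}\partial_xg\in L^2(-1,1)\}$ of $-(1-x^2)\partial_x[e^{x/d}(1-x^2)\partial_xg]+e^{x/d}g=-(1-x^2)^{3/2}e^{x/d}$ on $(-1,1)$ (this solution exists, is unique and is nonpositive). *)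

From Stdlib Require Import Reals Lra.
Open Scope R_scope.

Definition improper_int (f : R -> R) (a b l : R) : Prop :=
  forall eps, eps > 0 -> exists delta, delta > 0 /\
    forall a' b', a < a' < a + delta -> b - delta < b' < b ->
      exists pr : Riemann_integrable f a' b', Rabs (RiemannInt pr - l) < eps.

(* f is in L^2(a,b) (for functions continuous on (a,b)). *)
Definition sq_integrable (f : R -> R) (a b : R) : Prop :=
  exists l, improper_int (fun x => f x ^ 2) a b l.

Definition in_V (g g1 : R -> R) : Prop :=
  sq_integrable (fun x => g x / sqrt (1 - x ^ 2)) (-1) 1 /\
  sq_integrable (fun x => sqrt (1 - x ^ 2) * g1 x) (-1) 1.

Definition solves_gd (d : R) (g : R -> R) : Prop :=
  exists g1 p1 : R -> R,
    (forall x, -1 < x < 1 -> derivable_pt_lim g x (g1 x)) /\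
    in_V g g1 /\
    (forall x, -1 < x < 1 ->
       derivable_pt_lim (fun y => exp (y / d) * ((1 - y ^ 2) * g1 y)) x (p1 x) /\
       - (1 - x ^ 2) * p1 x + exp (x / d) * g x
         = - Rpower (1 - x ^ 2) (3 / 2) * exp (x / d)).

Definition h_d (g : R -> R) (x : R) : R := g x / sqrt (1 - x ^ 2).
Definition M_d (d x : R) : R := exp (x / d).

Definition c2_num_integrand (d : R) (g : R -> R) (t : R) : R :=
  cos t * sin t ^ 2 * h_d g (cos t) * M_d d (cos t) * sin t.
Definition c2_den_integrand (d : R) (g : R -> R) (t : R) : R :=
  sin t ^ 2 * h_d g (cos t) * M_d d (cos t) * sin t.

(* Write s = sqrt(1-x^2), M = exp(x/d) and h = g_d/s.  After the substitution
   x = cos t the two integrals become  N = int_{-1}^1 x(1-x^2) h M  and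
   D = int_{-1}^1 (1-x^2) h M.  For d = +oo the solution is g = -s/2, so we put
   u = (g_d + s/2)/s  and  v = s g_d' - x/2  (the deviations of h and of s g_d'
   from their limits).  Membership of g_d in V makes u^2 and v^2 integrable.

   1. Energy estimate.  The flux F = M (1-x^2) u v has derivative
      F' = M (u^2 - x(1-x^2) u/(2d) + v^2) >= u^2/4 - 1/(4d^2)  by the equation,
      and F vanishes along sequences tending to +-1 (because |F| <= (1-x^2) phi
      with phi integrable while 1/(1-x^2) is not).  Hence  int u^2 <= 2/d^2.
   2. The integrand of D differs from -(1-x^2)/2 by at most 2/d + d u^2, so
      |D + 2/3| <= 6/d.  The integrand of N is, up to an error 2/d^2 + u^2/6, the
      derivative of an explicit primitive plus a boundary term that again
      vanishes at +-1, so |N + 1/(9d)| <= 5/d^2.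
   3. Hence N/D = 1/(6d) + O(1/d^2). *)

From Stdlib Require Import Reals Lra Psatz Classical FunctionalExtensionality.
Open Scope R_scope.

(* Continuity and differentiation rules in the shape [fun y => A y op B y],
   so that the tactics [cont] and [der] below can decompose an expression. *)
Lemma c_plus f g x : continuity_pt f x -> continuity_pt g x -> continuity_pt (fun y => f y + g y) x.
Proof. intros; apply (continuity_pt_plus f g x); auto. Qed.
Lemma c_minus f g x : continuity_pt f x -> continuity_pt g x -> continuity_pt (fun y => f y - g y) x.
Proof. intros; apply (continuity_pt_minus f g x); auto. Qed.
Lemma c_mult f g x : continuity_pt f x -> continuity_pt g x -> continuity_pt (fun y => f y * g y) x.
Proof. intros; apply (continuity_pt_mult f g x); auto. Qed.
Lemma c_opp f x : continuity_pt f x -> continuity_pt (fun y => - f y) x.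
Proof. intros; apply (continuity_pt_opp f x); auto. Qed.
Lemma c_inv f x : continuity_pt f x -> f x <> 0 -> continuity_pt (fun y => / f y) x.
Proof. intros; apply (continuity_pt_inv f x); auto. Qed.
Lemma c_div f g x : continuity_pt f x -> continuity_pt g x -> g x <> 0 -> continuity_pt (fun y => f y / g y) x.
Proof. intros; apply (continuity_pt_div f g x); auto. Qed.
Lemma c_const c x : continuity_pt (fun _ => c) x.
Proof. apply continuity_pt_const. intros a b; reflexivity. Qed.
Lemma c_id x : continuity_pt (fun y => y) x.
Proof. apply derivable_continuous_pt, derivable_pt_id. Qed.
Lemma c_comp f h x : continuity_pt f x -> continuity_pt h (f x) -> continuity_pt (fun y => h (f y)) x.
Proof. intros; apply (continuity_pt_comp f h x); auto. Qed.
Lemma c_exp f x : continuity_pt f x -> continuity_pt (fun y => exp (f y)) x.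
Proof. intros; apply (c_comp f exp); auto. apply derivable_continuous_pt, derivable_pt_exp. Qed.
Lemma c_sqrt f x : continuity_pt f x -> 0 <= f x -> continuity_pt (fun y => sqrt (f y)) x.
Proof. intros; apply (c_comp f sqrt); auto. apply continuity_pt_sqrt; auto. Qed.
Lemma c_pow f n x : continuity_pt f x -> continuity_pt (fun y => f y ^ n) x.
Proof. intros; apply (c_comp f (fun z => z ^ n)); auto. apply derivable_continuous_pt, derivable_pt_pow. Qed.

Ltac cont1 :=
  match goal with
  | |- continuity_pt (fun y => @?A y + @?B y) _ => apply (c_plus A B)
  | |- continuity_pt (fun y => @?A y - @?B y) _ => apply (c_minus A B)
  | |- continuity_pt (fun y => @?A y * @?B y) _ => apply (c_mult A B)
  | |- continuity_pt (fun y => @?A y / @?B y) _ => apply (c_div A B)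
  | |- continuity_pt (fun y => - @?A y) _ => apply (c_opp A)
  | |- continuity_pt (fun y => / @?A y) _ => apply (c_inv A)
  | |- continuity_pt (fun y => exp (@?A y)) _ => apply (c_exp A)
  | |- continuity_pt (fun y => sqrt (@?A y)) _ => apply (c_sqrt A)
  | |- continuity_pt (fun y => @?A y ^ ?n) _ => apply (c_pow A n)
  | |- continuity_pt (fun y => y) _ => apply c_id
  | |- continuity_pt (fun _ => ?c) _ => apply c_const
  end.
Ltac cont := repeat (cont1; cbv beta).

Lemma d_ext f x l l' : derivable_pt_lim f x l' -> l' = l -> derivable_pt_lim f x l.
Proof. intros; subst; auto. Qed.
Lemma d_plus f g x a b : derivable_pt_lim f x a -> derivable_pt_lim g x b ->
  derivable_pt_lim (fun y => f y + g y) x (a + b).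
Proof. intros; apply (derivable_pt_lim_plus f g x); auto. Qed.
Lemma d_minus f g x a b : derivable_pt_lim f x a -> derivable_pt_lim g x b ->
  derivable_pt_lim (fun y => f y - g y) x (a - b).
Proof. intros; apply (derivable_pt_lim_minus f g x); auto. Qed.
Lemma d_mult f g x a b : derivable_pt_lim f x a -> derivable_pt_lim g x b ->
  derivable_pt_lim (fun y => f y * g y) x (a * g x + f x * b).
Proof. intros; apply (derivable_pt_lim_mult f g x); auto. Qed.
Lemma d_div f g x a b : derivable_pt_lim f x a -> derivable_pt_lim g x b -> g x <> 0 ->
  derivable_pt_lim (fun y => f y / g y) x ((a * g x - b * f x) / Rsqr (g x)).
Proof. intros; apply (derivable_pt_lim_div f g x); auto. Qed.
Lemma d_opp f x a : derivable_pt_lim f x a -> derivable_pt_lim (fun y => - f y) x (- a).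
Proof. intros; apply (derivable_pt_lim_opp f x); auto. Qed.
Lemma d_const c x : derivable_pt_lim (fun _ => c) x 0.
Proof. apply (derivable_pt_lim_const c x). Qed.
Lemma d_id x : derivable_pt_lim (fun y => y) x 1.
Proof. apply (derivable_pt_lim_id x). Qed.
Lemma d_exp f x a : derivable_pt_lim f x a -> derivable_pt_lim (fun y => exp (f y)) x (exp (f x) * a).
Proof. intros; apply (derivable_pt_lim_comp f exp x); auto. apply derivable_pt_lim_exp. Qed.
Lemma d_sqrt f x a : derivable_pt_lim f x a -> 0 < f x ->
  derivable_pt_lim (fun y => sqrt (f y)) x (/ (2 * sqrt (f x)) * a).
Proof. intros; apply (derivable_pt_lim_comp f sqrt x); auto. apply derivable_pt_lim_sqrt; auto. Qed.
Lemma d_ln f x a : derivable_pt_lim f x a -> 0 < f x ->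
  derivable_pt_lim (fun y => ln (f y)) x (/ (f x) * a).
Proof. intros; apply (derivable_pt_lim_comp f ln x); auto. apply derivable_pt_lim_ln; auto. Qed.
Lemma d_pow f n x a : derivable_pt_lim f x a ->
  derivable_pt_lim (fun y => f y ^ n) x (INR n * f x ^ pred n * a).
Proof. intros; apply (derivable_pt_lim_comp f (fun z => z ^ n) x); auto. apply derivable_pt_lim_pow. Qed.

Ltac der1 :=
  match goal with
  | |- derivable_pt_lim (fun y => @?A y + @?B y) _ _ => apply (d_plus A B)
  | |- derivable_pt_lim (fun y => @?A y - @?B y) _ _ => apply (d_minus A B)
  | |- derivable_pt_lim (fun y => @?A y * @?B y) _ _ => apply (d_mult A B)
  | |- derivable_pt_lim (fun y => @?A y / @?B y) _ _ => apply (d_div A B)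
  | |- derivable_pt_lim (fun y => - @?A y) _ _ => apply (d_opp A)
  | |- derivable_pt_lim (fun y => exp (@?A y)) _ _ => apply (d_exp A)
  | |- derivable_pt_lim (fun y => sqrt (@?A y)) _ _ => apply (d_sqrt A)
  | |- derivable_pt_lim (fun y => ln (@?A y)) _ _ => apply (d_ln A)
  | |- derivable_pt_lim (fun y => @?A y ^ ?n) _ _ => apply (d_pow A n)
  | |- derivable_pt_lim (fun y => y) _ _ => apply d_id
  | |- derivable_pt_lim (fun _ => ?c) _ _ => apply d_const
  end.
Ltac der := repeat (der1; cbv beta).

(* Identities involving s = sqrt(1-x^2): after clearing denominators, every
   power s^(k+2) is reduced to (1-x^2) s^k, leaving a polynomial identity. *)
Lemma pow_reduce s c n : s ^ 2 = c -> s ^ S (S n) = c * s ^ n.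
Proof. intros h; rewrite <- h; simpl; ring. Qed.
Lemma frac_eq A B C D : B <> 0 -> D <> 0 -> A * D = C * B -> A / B = C / D.
Proof. intros hb hd h. apply (Rmult_eq_reg_r (B * D)); [| apply Rmult_integral_contrapositive_currified; auto].
  field_simplify; auto. rewrite h; ring. Qed.
Lemma frac_eq_l A B C : B <> 0 -> A = C * B -> A / B = C.
Proof. intros hb h. rewrite h. field. auto. Qed.
Lemma frac_eq_r A C D : D <> 0 -> A * D = C -> A = C / D.
Proof. intros hd h. rewrite <- h. field. auto. Qed.
Ltac field_sqrt h :=
  field_simplify;
  [ first [ apply frac_eq | apply frac_eq_l | apply frac_eq_r | idtac ];
    [ .. | ring_simplify; repeat rewrite (pow_reduce _ _ _ h); ring ] | .. ].
Ltac nonzero := first [ lra | (apply Rgt_not_eq; nra) | (apply Rlt_not_eq; nra) ].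

Lemma FTC_segment (F f : R -> R) (a b : R) :
  a <= b ->
  (forall x, a <= x <= b -> derivable_pt_lim F x (f x)) ->
  (forall x, a <= x <= b -> continuity_pt f x) ->
  forall pr : Riemann_integrable f a b, RiemannInt pr = F b - F a.
Proof.
  intros hab hd hc pr.
  assert (A1 : antiderivative f F a b).
  { split; [|exact hab]. intros x hx. exists (exist _ (f x) (hd x hx)). reflexivity. }
  destruct (antiderivative_Ucte _ _ _ _ _ A1 (RiemannInt_P29 hab hc)) as [c hc'].
  rewrite (RiemannInt_P20 hab (FTC_P1 hab hc) pr), (hc' a), (hc' b); lra.
Qed.

Lemma continuity_pt_locally f h x r : r > 0 -> (forall y, Rabs (y - x) < r -> f y = h y) ->
  continuity_pt h x -> continuity_pt f x.
Proof.
  intros hr he hc eps heps. destruct (hc eps heps) as [del [hdel H]].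
  exists (Rmin del r). split; [apply Rmin_pos; lra|].
  intros y [hy1 hy2]. simpl in *. unfold Rdist in *.
  assert (hm1 := Rmin_l del r). assert (hm2 := Rmin_r del r).
  rewrite (he y), (he x) by (rewrite ?Rminus_diag, ?Rabs_R0; lra).
  apply H. split; auto. lra.
Qed.

(* epsilon-delta form of continuity, without the side condition y <> x. *)
Lemma continuity_pt_eps f x : continuity_pt f x -> forall eps, eps > 0 -> exists del, del > 0 /\
  forall y, Rabs (y - x) < del -> Rabs (f y - f x) < eps.
Proof.
  intros hc eps heps. destruct (hc eps heps) as [del [hdel H]]. exists del. split; auto.
  intros y hy. destruct (Req_dec y x) as [->|hne].
  - rewrite Rminus_diag, Rabs_R0; auto.
  - apply (H y). split; [split; [exact I|auto]|exact hy].
Qed.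

Lemma le_eps x K : (forall eps, eps > 0 -> x <= K + eps) -> x <= K.
Proof. intros h. apply Rnot_lt_le. intro hlt. specialize (h ((x - K)/2) ltac:(lra)). lra. Qed.

Lemma Rabs_le_inv x a : Rabs x <= a -> -a <= x <= a.
Proof. intros h. unfold Rabs in h. destruct Rcase_abs in h; lra. Qed.

Lemma RiemannInt_nonneg f a b (pr : Riemann_integrable f a b) :
  a <= b -> (forall x, a < x < b -> 0 <= f x) -> 0 <= RiemannInt pr.
Proof.
  intros hab h. pose (pc := RiemannInt_P14 a b 0).
  assert (E := RiemannInt_P15 pc).
  assert (L : RiemannInt pc <= RiemannInt pr)
    by (apply RiemannInt_P19; auto; intros; unfold fct_cte; apply h; auto).
  lra.
Qed.

Lemma RiemannInt_le f g a b (pf : Riemann_integrable f a b) (pg : Riemann_integrable g a b) :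
  a <= b -> (forall x, a < x < b -> f x <= g x) -> RiemannInt pf <= RiemannInt pg.
Proof. intros; apply RiemannInt_P19; auto. Qed.

Lemma RiemannInt_abs_le f g a b (pf : Riemann_integrable f a b) (pg : Riemann_integrable g a b) :
  a <= b -> (forall x, a < x < b -> Rabs (f x) <= g x) -> Rabs (RiemannInt pf) <= RiemannInt pg.
Proof.
  intros hab h.
  assert (L1 := RiemannInt_le _ _ a b pf pg hab
    ltac:(intros x hx; specialize (h x hx); apply Rabs_le_inv in h; lra)).
  assert (L2 := RiemannInt_nonneg _ a b (RiemannInt_P10 1 pf pg) hab
    ltac:(intros x hx; specialize (h x hx); apply Rabs_le_inv in h; lra)).
  rewrite (RiemannInt_P13 pf pg) in L2. apply Rabs_le. lra.
Qed.

Lemma RiemannInt_subinterval_le f a' a b b' (p : Riemann_integrable f a b) (p' : Riemann_integrable f a' b') :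
  a' <= a -> a <= b -> b <= b' -> (forall x, a' <= x <= b' -> continuity_pt f x) ->
  (forall x, a' < x < b' -> 0 <= f x) -> RiemannInt p <= RiemannInt p'.
Proof.
  intros h1 h2 h3 hc hn.
  assert (q1 : Riemann_integrable f a' a) by (apply continuity_implies_RiemannInt; auto; intros; apply hc; lra).
  assert (q2 : Riemann_integrable f a b') by (apply continuity_implies_RiemannInt; try lra; intros; apply hc; lra).
  assert (q3 : Riemann_integrable f b b') by (apply continuity_implies_RiemannInt; auto; intros; apply hc; lra).
  assert (E1 := RiemannInt_P26 q1 q2 p'). assert (E2 := RiemannInt_P26 p q3 q2).
  assert (N1 : 0 <= RiemannInt q1) by (apply RiemannInt_nonneg; auto; intros; apply hn; lra).
  assert (N3 : 0 <= RiemannInt q3) by (apply RiemannInt_nonneg; auto; intros; apply hn; lra).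
  lra.
Qed.

(** * Improper integrals on (-1,1) *)

Definition cont_open (f : R -> R) : Prop := forall x, -1 < x < 1 -> continuity_pt f x.

Lemma RI_open f a b : -1 < a -> a <= b -> b < 1 -> cont_open f -> Riemann_integrable f a b.
Proof. intros; apply continuity_implies_RiemannInt; auto. intros; apply H2; lra. Qed.

(* [f] is continuous and nonnegative on (-1,1), with integrals over compact
   subintervals bounded uniformly: the integrable nonnegative functions. *)
Definition int_bounded (f : R -> R) : Prop :=
  cont_open f /\ (forall x, -1 < x < 1 -> 0 <= f x) /\
  exists K, forall a b (pr : Riemann_integrable f a b), -1 < a -> a <= b -> b < 1 -> RiemannInt pr <= K.

Lemma int_bounded_of_improper f l : cont_open f -> (forall x, -1 < x < 1 -> 0 <= f x) ->
  improper_int f (-1) 1 l -> int_bounded f.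
Proof.
  intros hc hn hi. split; [auto|split; [auto|]].
  destruct (hi 1 Rlt_0_1) as [dl [hdl H]]. exists (l + 1).
  intros a b pr ha hab hb.
  set (a' := Rmin a (-1 + dl/2)). set (b' := Rmax b (1 - dl/2)).
  assert (A1 : -1 < a' < -1 + dl) by (unfold a', Rmin; destruct Rle_dec; lra).
  assert (B1 : 1 - dl < b' < 1) by (unfold b', Rmax; destruct Rle_dec; lra).
  destruct (H a' b') as [pr' hpr']; try lra.
  assert (M := RiemannInt_subinterval_le f a' a b b' pr pr' (Rmin_l _ _) hab (Rmax_l _ _)
                 ltac:(intros; apply hc; lra) ltac:(intros; apply hn; lra)).
  apply Rabs_def2 in hpr'. lra.
Qed.

Lemma int_bounded_dom f f1 f2 c1 c2 c3 : int_bounded f1 -> int_bounded f2 -> cont_open f ->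
  (forall x, -1 < x < 1 -> 0 <= f x <= c1 * f1 x + c2 * f2 x + c3) ->
  0 <= c1 -> 0 <= c2 -> 0 <= c3 -> int_bounded f.
Proof.
  intros [hc1 [hn1 [K1 hK1]]] [hc2 [hn2 [K2 hK2]]] hc h hc1p hc2p hc3p.
  split; [auto|split; [intros x hx; apply h; auto|]].
  exists (c1 * K1 + c2 * K2 + c3 * 2).
  intros a b pr ha hab hb.
  pose (q0 := RI_open (fun _ => c3) a b ha hab hb (fun x _ => c_const c3 x)).
  pose (q1 := RI_open f1 a b ha hab hb hc1).
  pose (q2 := RI_open f2 a b ha hab hb hc2).
  pose (q01 := RiemannInt_P10 c1 q0 q1). pose (q := RiemannInt_P10 c2 q01 q2).
  assert (L := RiemannInt_le _ _ a b pr q hab ltac:(intros x hx; cbv beta; specialize (h x ltac:(lra)); lra)).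
  assert (E0 : RiemannInt q0 = c3 * (b - a)) by apply RiemannInt_P15.
  rewrite (RiemannInt_P13 q01 q2), (RiemannInt_P13 q0 q1), E0 in L.
  specialize (hK1 a b q1 ha hab hb). specialize (hK2 a b q2 ha hab hb).
  assert (c1 * RiemannInt q1 <= c1 * K1) by (apply Rmult_le_compat_l; auto).
  assert (c2 * RiemannInt q2 <= c2 * K2) by (apply Rmult_le_compat_l; auto).
  assert (c3 * (b - a) <= c3 * 2) by (apply Rmult_le_compat_l; lra).
  lra.
Qed.

(* Monotone convergence: the improper integral of an integrable nonnegative
   function exists (it is the supremum of the integrals over subintervals). *)
Lemma improper_of_int_bounded f : int_bounded f -> exists l, improper_int f (-1) 1 l.
Proof.
  intros [hc [hn [K hK]]].
  set (E := fun v => exists a b (pr : Riemann_integrable f a b),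
              -1 < a /\ a <= b /\ b < 1 /\ v = RiemannInt pr).
  assert (Hb : bound E). { exists K. intros v [a [b [pr [h1 [h2 [h3 ->]]]]]]. apply hK; auto. }
  assert (He : exists v, E v).
  { set (p0 := RI_open f 0 0 ltac:(lra) ltac:(lra) ltac:(lra) hc).
    exists (RiemannInt p0), 0, 0, p0. repeat split; lra. }
  destruct (completeness E Hb He) as [m [hub hlub]].
  exists m. intros eps heps.
  assert (Hex : exists v, E v /\ m - eps < v).
  { apply NNPP. intro Hn. assert (m <= m - eps); [|lra].
    apply hlub. intros v hv. apply Rnot_lt_le. intro hlt. apply Hn. exists v; auto. }
  destruct Hex as [v [[a0 [b0 [pr0 [h1 [h2 [h3 ->]]]]]] hv]].
  exists (Rmin (a0 + 1) (1 - b0)). split; [apply Rmin_pos; lra|].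
  intros a' b' ha' hb'.
  assert (Q1 := Rmin_l (a0 + 1) (1 - b0)). assert (Q2 := Rmin_r (a0 + 1) (1 - b0)).
  set (p := RI_open f a' b' ltac:(lra) ltac:(lra) ltac:(lra) hc). exists p.
  assert (M := RiemannInt_subinterval_le f a' a0 b0 b' pr0 p ltac:(lra) h2 ltac:(lra)
                 ltac:(intros; apply hc; lra) ltac:(intros; apply hn; lra)).
  assert (U : RiemannInt p <= m). { apply hub. exists a', b', p. repeat split; lra. }
  apply Rabs_def1; lra.
Qed.

Lemma improper_lin f g a b l1 l2 c : improper_int f a b l1 -> improper_int g a b l2 ->
  improper_int (fun x => f x + c * g x) a b (l1 + c * l2).
Proof.
  intros h1 h2 eps heps.
  set (e' := eps / (2 * (1 + Rabs c))).
  assert (hc := Rabs_pos c).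
  assert (he' : e' > 0) by (unfold e'; apply Rdiv_lt_0_compat; lra).
  destruct (h1 e' he') as [d1 [hd1 H1]]. destruct (h2 e' he') as [d2 [hd2 H2]].
  exists (Rmin d1 d2). split; [apply Rmin_pos; lra|].
  intros a' b' ha hb.
  assert (hm1 := Rmin_l d1 d2). assert (hm2 := Rmin_r d1 d2).
  destruct (H1 a' b') as [p1 hp1]; try lra. destruct (H2 a' b') as [p2 hp2]; try lra.
  exists (RiemannInt_P10 c p1 p2). rewrite (RiemannInt_P13 p1 p2).
  replace (RiemannInt p1 + c * RiemannInt p2 - (l1 + c * l2)) with
    ((RiemannInt p1 - l1) + c * (RiemannInt p2 - l2)) by ring.
  eapply Rle_lt_trans; [apply Rabs_triang|]. rewrite Rabs_mult.
  assert (Rabs c * Rabs (RiemannInt p2 - l2) <= Rabs c * e') by (apply Rmult_le_compat_l; lra).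
  assert (e' * (2 * (1 + Rabs c)) = eps) by (unfold e'; field; lra).
  nra.
Qed.

Lemma improper_ext f g a b l : (forall x, f x = g x) -> improper_int f a b l -> improper_int g a b l.
Proof. intros h. replace g with f; auto. apply functional_extensionality; auto. Qed.

(* Dominated functions have an improper integral: write f = (f + phi) - phi. *)
Lemma improper_of_dominated f phi : cont_open f -> int_bounded phi ->
  (forall x, -1 < x < 1 -> Rabs (f x) <= phi x) -> exists l, improper_int f (-1) 1 l.
Proof.
  intros hc hb h.
  assert (B : int_bounded (fun x => f x + phi x)).
  { apply (int_bounded_dom _ phi phi 2 0 0); auto; try lra.
    - intros x hx. apply (c_plus f phi); auto. apply hb; auto.
    - intros x hx. specialize (h x hx). apply Rabs_le_inv in h. lra. }
  destruct (improper_of_int_bounded _ B) as [l1 h1]. destruct (improper_of_int_bounded _ hb) as [l2 h2].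
  exists (l1 + -1 * l2). eapply improper_ext; [|apply (improper_lin _ _ _ _ _ _ (-1) h1 h2)].
  intros; cbv beta; ring.
Qed.

Lemma improper_limit_bound f l Phi K : improper_int f (-1) 1 l ->
  (forall eps, eps > 0 -> forall a0 b0, -1 < a0 -> b0 < 1 -> exists a b, -1 < a < a0 /\ b0 < b < 1 /\
     forall pr : Riemann_integrable f a b, Rabs (RiemannInt pr - (Phi b - Phi a)) <= K + eps) ->
  continuity_pt Phi 1 -> continuity_pt Phi (-1) ->
  Rabs (l - (Phi 1 - Phi (-1))) <= K.
Proof.
  intros hi h c1 c2. apply le_eps. intros eps heps.
  destruct (hi (eps/4) ltac:(lra)) as [d1 [hd1 H1]].
  destruct (continuity_pt_eps _ _ c1 (eps/4) ltac:(lra)) as [e1 [he1 E1]].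
  destruct (continuity_pt_eps _ _ c2 (eps/4) ltac:(lra)) as [e2 [he2 E2]].
  set (m := Rmin d1 (Rmin e1 (Rmin e2 1))).
  assert (hm : 0 < m /\ m <= d1 /\ m <= e1 /\ m <= e2 /\ m <= 1).
  { unfold m, Rmin; repeat destruct Rle_dec; lra. }
  destruct (h (eps/4) ltac:(lra) (-1 + m) (1 - m)) as [a [b [ha [hb Hab]]]]; try lra.
  destruct (H1 a b) as [pr hpr]; try lra.
  specialize (Hab pr).
  specialize (E1 b ltac:(apply Rabs_def1; lra)). specialize (E2 a ltac:(apply Rabs_def1; lra)).
  apply Rabs_def2 in hpr, E1, E2. apply Rabs_le_inv in Hab.
  apply Rabs_le. lra.
Qed.

(** * Vanishing of boundary terms *)

(* artanh is a primitive of 1/(1-x^2), which is not integrable at +-1. *)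
Definition artanh (x : R) : R := (ln (1 + x) - ln (1 - x)) / 2.

Lemma artanh_integral eps a b (pr : Riemann_integrable (fun x => eps * / (1 - x^2)) a b) :
  -1 < a -> a <= b -> b < 1 -> RiemannInt pr = eps * artanh b - eps * artanh a.
Proof.
  intros ha hab hb. unfold artanh.
  apply (FTC_segment (fun x => eps * ((ln (1 + x) - ln (1 - x)) / 2))); auto.
  - intros x hx. eapply d_ext. der. all: try lra. unfold Rsqr; simpl. field. nra.
  - intros x hx. cont. intro h. nra.
Qed.

Lemma artanh_odd x : artanh (- x) = - artanh x.
Proof. unfold artanh. replace (1 + - x) with (1 - x) by ring. replace (1 - - x) with (1 + x) by ring. field. Qed.

Lemma artanh_unbounded c A : -1 < c < 1 -> exists b, c < b < 1 /\ A < artanh b.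
Proof.
  intros hc. set (T := Rabs (2 * A) + Rabs (ln (1 - c)) + 1).
  assert (h1 := Rle_abs (2 * A)). assert (h2 := Rle_abs (- ln (1 - c))). rewrite Rabs_Ropp in h2.
  assert (h3 := Rabs_pos (2 * A)). assert (h4 := Rabs_pos (ln (1 - c))).
  assert (hT : exp (- T) < 1 - c).
  { rewrite <- (exp_ln (1 - c)) by lra. apply exp_increasing. unfold T. lra. }
  assert (hT1 : exp (- T) < 1) by (rewrite <- exp_0; apply exp_increasing; unfold T; lra).
  assert (hT0 := exp_pos (- T)).
  exists (1 - exp (- T)). split; [lra|].
  unfold artanh. replace (1 - (1 - exp (- T))) with (exp (- T)) by ring. rewrite ln_exp.
  assert (0 < ln (1 + (1 - exp (- T)))) by (rewrite <- ln_1; apply ln_increasing; lra).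
  unfold T in *. lra.
Qed.

Lemma int_ge_artanh phi eps a b (pr : Riemann_integrable phi a b) :
  cont_open phi -> -1 < a -> a <= b -> b < 1 ->
  (forall x, a < x < b -> eps <= (1 - x^2) * phi x) ->
  eps * artanh b - eps * artanh a <= RiemannInt pr.
Proof.
  intros hc ha hab hb h.
  assert (hc' : cont_open (fun x => eps * / (1 - x^2))) by (intros x hx; cont; nra).
  pose (q := RI_open _ a b ha hab hb hc').
  rewrite <- (artanh_integral eps a b q) by lra.
  apply RiemannInt_le; auto. intros x hx. specialize (h x hx).
  assert (0 < 1 - x^2) by nra.
  apply (Rmult_le_reg_l (1 - x^2)); auto. field_simplify; lra.
Qed.

Lemma small_near_right F phi : int_bounded phi ->
  (forall x, -1 < x < 1 -> Rabs (F x) <= (1 - x^2) * phi x) ->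
  forall eps, eps > 0 -> forall b0, b0 < 1 -> exists b, b0 < b < 1 /\ Rabs (F b) < eps.
Proof.
  intros [hc [_ [K hK]]] hF eps heps b0 hb0.
  apply NNPP. intro Hn.
  set (c := Rmax b0 0). assert (hc1 : b0 <= c) by apply Rmax_l. assert (hc2 : 0 <= c) by apply Rmax_r.
  assert (hc3 : c < 1) by (unfold c, Rmax; destruct Rle_dec; lra).
  destruct (artanh_unbounded c ((K + eps * artanh c) / eps)) as [b [hb hA]]; [lra|].
  pose (p := RI_open phi c b ltac:(lra) ltac:(lra) ltac:(lra) hc).
  assert (L := int_ge_artanh phi eps c b p hc ltac:(lra) ltac:(lra) ltac:(lra)
    ltac:(intros x hx; apply Rle_trans with (Rabs (F x)); [|apply hF; lra];
          apply Rnot_lt_le; intro hlt; apply Hn; exists x; split; [lra|auto])).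
  specialize (hK c b p ltac:(lra) ltac:(lra) ltac:(lra)).
  apply (Rmult_lt_compat_l eps) in hA; auto.
  replace (eps * ((K + eps * artanh c) / eps)) with (K + eps * artanh c) in hA by (field; lra).
  lra.
Qed.

Lemma small_near_left F phi : int_bounded phi ->
  (forall x, -1 < x < 1 -> Rabs (F x) <= (1 - x^2) * phi x) ->
  forall eps, eps > 0 -> forall a0, -1 < a0 -> exists a, -1 < a < a0 /\ Rabs (F a) < eps.
Proof.
  intros [hc [_ [K hK]]] hF eps heps a0 ha0.
  apply NNPP. intro Hn.
  set (c := Rmin a0 0). assert (hc1 : c <= a0) by apply Rmin_l. assert (hc2 : c <= 0) by apply Rmin_r.
  assert (hc3 : -1 < c) by (unfold c, Rmin; destruct Rle_dec; lra).
  destruct (artanh_unbounded (- c) ((K - eps * artanh c) / eps)) as [b [hb hA]]; [lra|].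
  rewrite <- (Ropp_involutive b), artanh_odd in hA.
  set (a := - b) in *. assert (ha : -1 < a < c) by (unfold a; lra).
  pose (p := RI_open phi a c ltac:(lra) ltac:(lra) ltac:(lra) hc).
  assert (L := int_ge_artanh phi eps a c p hc ltac:(lra) ltac:(lra) ltac:(lra)
    ltac:(intros x hx; apply Rle_trans with (Rabs (F x)); [|apply hF; lra];
          apply Rnot_lt_le; intro hlt; apply Hn; exists x; split; [lra|auto])).
  specialize (hK a c p ltac:(lra) ltac:(lra) ltac:(lra)).
  apply (Rmult_lt_compat_l eps) in hA; auto.
  replace (eps * ((K - eps * artanh c) / eps)) with (K - eps * artanh c) in hA by (field; lra).
  lra.
Qed.

(** * Estimating an improper integral by an approximate primitive *)

Lemma int_estimate_segment f P psi w K0 K1 U a b : -1 < a -> a <= b -> b < 1 ->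
  cont_open f -> cont_open psi -> cont_open w ->
  (forall x, a <= x <= b -> derivable_pt_lim P x (psi x)) ->
  (forall x, -1 < x < 1 -> Rabs (f x - psi x) <= K0 + K1 * w x) -> 0 <= K0 -> 0 <= K1 ->
  (forall pr : Riemann_integrable w a b, RiemannInt pr <= U) ->
  forall pr : Riemann_integrable f a b, Rabs (RiemannInt pr - (P b - P a)) <= 2 * K0 + K1 * U.
Proof.
  intros ha hab hb cf cp cw hd hbd hK0 hK1 hU pr.
  pose (pp := RI_open psi a b ha hab hb cp).
  assert (E1 := FTC_segment P psi a b hab hd ltac:(intros; apply cp; lra) pp).
  pose (pd := RiemannInt_P10 (-1) pr pp).
  pose (pw := RI_open w a b ha hab hb cw).
  pose (pc := RI_open (fun _ => K0) a b ha hab hb (fun x _ => c_const K0 x)).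
  pose (pb := RiemannInt_P10 K1 pc pw).
  assert (E4 : RiemannInt pc = K0 * (b - a)) by apply RiemannInt_P15.
  assert (L := RiemannInt_abs_le _ _ a b pd pb hab ltac:(intros x hx; cbv beta;
     replace (f x + -1 * psi x) with (f x - psi x) by ring; apply hbd; lra)).
  rewrite (RiemannInt_P13 pr pp), (RiemannInt_P13 pc pw), E4 in L.
  specialize (hU pw).
  assert (K0 * (b - a) <= K0 * 2) by (apply Rmult_le_compat_l; lra).
  assert (K1 * RiemannInt pw <= K1 * U) by (apply Rmult_le_compat_l; lra).
  replace (RiemannInt pr - (P b - P a)) with (RiemannInt pr + -1 * RiemannInt pp) by lra.
  lra.
Qed.

(* On (-1,1): the approximate primitive may contain a boundary term B that is
   dominated by (1-x^2) phi with phi integrable; it does not contribute. *)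
Lemma improper_int_approx f l Psi B psi w phi K0 K1 U :
  improper_int f (-1) 1 l -> cont_open f -> cont_open psi -> cont_open w -> int_bounded phi ->
  (forall x, -1 < x < 1 -> Rabs (B x) <= (1 - x^2) * phi x) ->
  (forall x, -1 < x < 1 -> derivable_pt_lim (fun y => B y + Psi y) x (psi x)) ->
  (forall x, -1 < x < 1 -> Rabs (f x - psi x) <= K0 + K1 * w x) -> 0 <= K0 -> 0 <= K1 ->
  (forall a b (pr : Riemann_integrable w a b), -1 < a -> a <= b -> b < 1 -> RiemannInt pr <= U) ->
  continuity_pt Psi 1 -> continuity_pt Psi (-1) ->
  Rabs (l - (Psi 1 - Psi (-1))) <= 2 * K0 + K1 * U.
Proof.
  intros hi cf cp cw hphi hB hd hbd hK0 hK1 hU c1 c2.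
  apply (improper_limit_bound f l Psi _ hi); auto.
  intros eps heps a0 b0 ha0 hb0.
  assert (m1 : Rmin a0 0 <= a0) by apply Rmin_l. assert (m2 : Rmin a0 0 <= 0) by apply Rmin_r.
  assert (m3 : b0 <= Rmax b0 0) by apply Rmax_l. assert (m4 : 0 <= Rmax b0 0) by apply Rmax_r.
  destruct (small_near_left B phi hphi hB (eps/2) ltac:(lra) (Rmin a0 0)) as [a [ha Ba]].
  { unfold Rmin; destruct Rle_dec; lra. }
  destruct (small_near_right B phi hphi hB (eps/2) ltac:(lra) (Rmax b0 0)) as [b [hb Bb]].
  { unfold Rmax; destruct Rle_dec; lra. }
  exists a, b. split; [lra|]. split; [lra|]. intros pr.
  assert (E := int_estimate_segment f (fun y => B y + Psi y) psi w K0 K1 U a b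
    ltac:(lra) ltac:(lra) ltac:(lra) cf cp cw ltac:(intros; apply hd; lra) hbd hK0 hK1
    ltac:(intros; apply hU; lra) pr).
  cbv beta in E. apply Rabs_def2 in Ba, Bb. apply Rabs_le_inv in E. apply Rabs_le. lra.
Qed.

(** * The substitution x = cos t *)

Lemma cos_in t : 0 < t < PI -> -1 < cos t < 1.
Proof.
  intros ht. assert (hs := sin_gt_0 t (proj1 ht) (proj2 ht)).
  assert (E := sin2_cos2 t). unfold Rsqr in E. split; nra.
Qed.

Lemma cos_antimono a b : 0 <= a -> a <= b -> b <= PI -> cos b <= cos a.
Proof.
  intros ha hab hb. destruct (Req_dec a b) as [->|hne]; [lra|].
  left; apply cos_decreasing_1; lra.
Qed.

(* On a segment [t1, t2] of (0, PI): int_{t1}^{t2} f(cos t) sin t dt equals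
   int_{cos t2}^{cos t1} f, because t |-> - P(cos t) is a primitive of the
   left integrand when P is a primitive of f. *)
Lemma RiemannInt_cos_segment f t1 t2 (pr : Riemann_integrable f (cos t2) (cos t1)) :
  cont_open f -> 0 < t1 -> t1 <= t2 -> t2 < PI ->
  exists pt : Riemann_integrable (fun t => f (cos t) * sin t) t1 t2, RiemannInt pt = RiemannInt pr.
Proof.
  intros hc h1 h12 h2.
  assert (hcos : forall t, t1 <= t <= t2 -> cos t2 <= cos t <= cos t1)
    by (intros t ht; split; apply cos_antimono; lra).
  assert (hin : forall t, t1 <= t <= t2 -> -1 < cos t < 1) by (intros; apply cos_in; lra).
  assert (hx : cos t2 <= cos t1) by (apply cos_antimono; lra).
  assert (C0 : forall x, cos t2 <= x <= cos t1 -> continuity_pt f x).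
  { intros x hx'. apply hc. destruct (hin t1), (hin t2); lra. }
  set (P := primitive hx (FTC_P1 hx C0)).
  assert (DP : forall x, cos t2 <= x <= cos t1 -> derivable_pt_lim P x (f x))
    by (intros; apply RiemannInt_P28; auto).
  assert (E : RiemannInt pr = P (cos t1) - P (cos t2)) by (apply FTC_segment; auto).
  assert (ct : forall t, t1 <= t <= t2 -> continuity_pt (fun t => f (cos t) * sin t) t).
  { intros t ht. apply (c_mult (fun t => f (cos t)) sin); [|apply continuity_sin].
    apply (c_comp cos f); [apply continuity_cos|apply hc, hin; auto]. }
  exists (continuity_implies_RiemannInt h12 ct).
  rewrite E, (FTC_segment (fun t => - P (cos t)) (fun t => f (cos t) * sin t)); auto; [ring|].
  intros t ht. eapply d_ext.
  - apply d_opp, (derivable_pt_lim_comp cos P); [apply derivable_pt_lim_cos|apply DP, hcos; auto].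
  - ring.
Qed.

Lemma improper_cos_substitution f l : cont_open f -> improper_int f (-1) 1 l ->
  improper_int (fun t => f (cos t) * sin t) 0 PI l.
Proof.
  intros hc hi eps heps.
  destruct (hi eps heps) as [dx [hdx H]].
  destruct (continuity_pt_eps cos 0 (continuity_cos 0) dx hdx) as [dc [hdc C]].
  rewrite cos_0 in C.
  assert (hPI := PI_RGT_0).
  exists (Rmin dc (PI/2)). split; [apply Rmin_pos; lra|].
  intros t1 t2 h1 h2.
  assert (m1 := Rmin_l dc (PI/2)). assert (m2 := Rmin_r dc (PI/2)).
  assert (X1 : 1 - dx < cos t1).
  { specialize (C t1 ltac:(rewrite Rminus_0_r; apply Rabs_def1; lra)). apply Rabs_def2 in C. lra. }
  assert (X2 : cos t2 < -1 + dx).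
  { specialize (C (PI - t2) ltac:(rewrite Rminus_0_r; apply Rabs_def1; lra)).
    rewrite cos_minus, cos_PI, sin_PI in C. apply Rabs_def2 in C. lra. }
  assert (X1p : 0 < cos t1) by (apply cos_gt_0; lra).
  assert (X2n : cos t2 < 0) by (apply cos_lt_0; lra).
  assert (Y1 := cos_in t1 ltac:(lra)). assert (Y2 := cos_in t2 ltac:(lra)).
  destruct (H (cos t2) (cos t1)) as [prx hprx]; try lra.
  destruct (RiemannInt_cos_segment f t1 t2 prx hc) as [pt hpt]; try lra.
  exists pt. rewrite hpt. exact hprx.
Qed.

Lemma exp_le_quadratic v : -1/2 <= v <= 1/2 -> exp v <= 1 + v + 2 * v^2.
Proof.
  intros hv. destruct (Rle_dec v 0) as [hn|hp].
  - assert (h1 := exp_ineq1_le (- v)).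
    assert (h2 : exp v * exp (- v) = 1) by (rewrite <- exp_plus, Rplus_opp_r; apply exp_0).
    assert (0 < exp v) by apply exp_pos.
    assert (exp v * (1 - v) <= 1) by nra.
    assert ((1 - v) * (1 + v + 2 * v^2) >= 1) by nra.
    nra.
  - assert (h1 := exp_ineq1_le (- (v/2))).
    assert (h2 : exp (v/2) * exp (- (v/2)) = 1) by (rewrite <- exp_plus, Rplus_opp_r; apply exp_0).
    assert (h3 : exp v = exp (v/2) * exp (v/2)) by (rewrite <- exp_plus; f_equal; field).
    assert (0 < exp (v/2)) by apply exp_pos.
    assert (exp (v/2) * (1 - v/2) <= 1) by nra.
    assert ((1 - v/2)^2 * (1 + v + 2 * v^2) >= 1) by nra.
    assert (exp (v/2) * exp (v/2) * ((1 - v/2) * (1 - v/2)) <= 1)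
      by (assert (0 <= exp (v/2) * (1 - v/2)) by nra; nra).
    nra.
Qed.

Lemma exp_weight_bounds x d : 2 <= d -> -1 <= x <= 1 ->
  1/2 <= exp (x/d) <= 2 /\ Rabs (exp (x/d) - 1) <= 2 / d /\ Rabs (exp (x/d) - 1 - x/d) <= 2 / d^2.
Proof.
  intros hd hx.
  set (a := 1/d).
  assert (ha : 0 < a <= 1/2)
    by (unfold a; split; [apply Rdiv_lt_0_compat; lra|apply (Rmult_le_reg_l d); try lra; field_simplify; lra]).
  assert (hva : -a <= x/d <= a) by (unfold a; split; apply (Rmult_le_reg_l d); try lra; field_simplify; lra).
  assert (U := exp_le_quadratic (x/d) ltac:(lra)). assert (L := exp_ineq1_le (x/d)).
  replace (2 / d) with (2 * a) by (unfold a; field; lra).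
  replace (2 / d^2) with (2 * a^2) by (unfold a; field; lra).
  repeat split; try nra; apply Rabs_le; split; nra.
Qed.

Lemma two_abs_le u d : d > 0 -> 2 * Rabs u <= 1/d + d * u^2.
Proof.
  intros hd. assert (h : 0 <= (d * Rabs u - 1)^2) by apply pow2_ge_0.
  assert (hu : Rabs u ^ 2 = u ^ 2) by (rewrite <- Rsqr_pow2, <- Rsqr_abs; unfold Rsqr; ring).
  apply (Rmult_le_reg_l d); auto. replace (d * (1/d + d * u^2)) with (1 + d^2 * u^2) by (field; lra).
  rewrite <- hu. nra.
Qed.

Lemma Rabs_sub_le a b : Rabs (a - b) <= Rabs a + Rabs b.
Proof. unfold Rminus. eapply Rle_trans; [apply Rabs_triang|]. rewrite Rabs_Ropp. lra. Qed.

Lemma Rabs_mult_le a b A B : Rabs a <= A -> Rabs b <= B -> Rabs (a * b) <= A * B.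
Proof. intros h1 h2. rewrite Rabs_mult. apply Rmult_le_compat; auto; apply Rabs_pos. Qed.

(* Coercivity of the flux derivative M (u^2 - w u + v^2). *)
Lemma coercive_lower M u w v W : 1/2 <= M <= 2 -> w^2 <= W -> M * (u^2 - w * u + v^2) >= u^2/4 - W.
Proof.
  intros hM hw. assert (0 <= (u-w)^2) by apply pow2_ge_0. assert (0 <= v^2) by apply pow2_ge_0.
  assert (P : u^2 - w*u + v^2 >= u^2/2 - w^2/2) by nra.
  destruct (Rle_dec 0 (u^2 - w*u + v^2)); nra.
Qed.

Lemma flux_bound M y u v : 1/2 <= M <= 2 -> 0 <= y -> Rabs (M * y * (u * v)) <= y * (u^2 + v^2).
Proof.
  intros hM hy.
  assert (h3 : Rabs (M * (u * v)) <= u^2 + v^2).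
  { assert (0 <= (u+v)^2) by apply pow2_ge_0. assert (0 <= (u-v)^2) by apply pow2_ge_0.
    destruct (Rle_dec 0 (u*v)); [rewrite Rabs_right|rewrite Rabs_left]; nra. }
  replace (M * y * (u * v)) with (y * (M * (u * v))) by ring. rewrite Rabs_mult, (Rabs_right y) by lra.
  apply Rmult_le_compat_l; auto.
Qed.

Lemma integrand_bound M y u : 1/2 <= M <= 2 -> Rabs y <= 1 -> Rabs (M * y * (u - 1/2)) <= u^2 + 2.
Proof.
  intros hM hy. assert (Au := two_abs_le u 1 ltac:(lra)).
  assert (Rabs (u - 1/2) <= Rabs u + 1/2)
    by (eapply Rle_trans; [apply Rabs_sub_le|]; rewrite (Rabs_right (1/2)) by lra; lra).
  assert (Rabs (M * y) <= 2) by (rewrite Rabs_mult, Rabs_right by lra; nra).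
  assert (Rabs (M * y * (u - 1/2)) <= 2 * (Rabs u + 1/2)) by (apply Rabs_mult_le; auto).
  lra.
Qed.

(* Error of the denominator integrand against -(1-x^2)/2, with y = 1-x^2. *)
Lemma den_error_bound M d y u : 1/2 <= M <= 2 -> Rabs (M - 1) <= 2 / d -> 0 <= y <= 1 -> d > 0 ->
  Rabs (M * y * u - y * (M - 1) / 2) <= 2 / d + d * u^2.
Proof.
  intros hM h1 hy hd.
  assert (A1 : Rabs (M * y * u) <= 2 * Rabs u) by (apply Rabs_mult_le; [apply Rabs_le|]; nra).
  assert (A2 : Rabs (y * (M - 1) / 2) <= 1 * (2 / d) / 2).
  { unfold Rdiv. rewrite Rabs_mult, (Rabs_right (/2)) by lra. apply Rmult_le_compat_r; [lra|].
    apply Rabs_mult_le; auto. apply Rabs_le; lra. }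
  assert (A3 := two_abs_le u d hd).
  eapply Rle_trans; [apply Rabs_sub_le|]. lra.
Qed.

(* Error of the numerator integrand against the derivative of its
   approximate primitive (x = abscissa, y = 1-x^2, c = 1-2x^2). *)
Lemma num_error_bound M d x y c u : 1/2 <= M <= 2 -> Rabs (M - 1) <= 2 / d ->
  Rabs (M - 1 - x / d) <= 2 / d^2 -> 0 <= y <= 1 -> -1 <= x <= 1 -> -1 <= c <= 1 -> d > 0 ->
  Rabs (x^2*y*(M - 1)/(12*d) + y*c*M*u/(6*d) - x*y*(M - 1 - x/d)/2) <= 2 / d^2 + u^2 / 6.
Proof.
  intros hM h1 h2 hy hx hc hd.
  assert (hid : 0 < /d) by (apply Rinv_0_lt_compat; lra).
  assert (T1 : Rabs (x^2*y*(M - 1)/(12*d)) <= 1 / (6 * d^2)).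
  { replace (x^2*y*(M - 1)/(12*d)) with ((x^2*y) * ((M-1) * /(12*d))) by (field; lra).
    replace (1 / (6*d^2)) with (1 * ((2/d) * /(12*d))) by (field; lra).
    apply Rabs_mult_le; [apply Rabs_le; nra|].
    rewrite Rabs_mult, (Rabs_right (/(12*d))) by (left; apply Rinv_0_lt_compat; lra).
    apply Rmult_le_compat_r; auto. left; apply Rinv_0_lt_compat; lra. }
  assert (T2 : Rabs (y*c*M*u/(6*d)) <= Rabs u / (3 * d)).
  { replace (y*c*M*u/(6*d)) with ((y*c*M) * (u * /(6*d))) by (field; lra).
    replace (Rabs u / (3*d)) with (2 * (Rabs u * /(6*d))) by (field; lra).
    apply Rabs_mult_le. { assert (-1 <= y*c <= 1) by (split; nra). apply Rabs_le; split; nra. }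
    rewrite Rabs_mult, (Rabs_right (/(6*d))) by (left; apply Rinv_0_lt_compat; lra). lra. }
  assert (T3 : Rabs (x*y*(M - 1 - x/d)/2) <= 1 / d^2).
  { replace (x*y*(M - 1 - x/d)/2) with ((x*y/2) * (M - 1 - x/d)) by (field; lra).
    replace (1 / d^2) with ((1/2) * (2/d^2)) by (field; lra).
    apply Rabs_mult_le; auto. apply Rabs_le; split; nra. }
  assert (T2' : Rabs u / (3 * d) <= 1 / (6 * d^2) + u^2/6).
  { assert (A := two_abs_le u d ltac:(lra)).
    apply (Rmult_le_reg_l (6 * d)); [nra|].
    replace (6 * d * (Rabs u / (3 * d))) with (2 * Rabs u) by (field; lra).
    replace (6 * d * (1 / (6 * d ^ 2) + u ^ 2 / 6)) with (1 / d + d * u^2) by (field; lra). auto. }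
  assert (E : 1 / (6 * d^2) = (1/6) * (1 / d^2)) by (field; lra).
  assert (0 < 1 / d^2) by (apply Rdiv_lt_0_compat; nra).
  eapply Rle_trans; [apply Rabs_sub_le|].
  eapply Rle_trans; [apply Rplus_le_compat_r, Rabs_triang|]. lra.
Qed.

(* Bound for the boundary term M y (x v - c u)/6 of the numerator. *)
Lemma boundary_term_bound M y x c u v : 1/2 <= M <= 2 -> 0 <= y -> -1 <= x <= 1 -> -1 <= c <= 1 ->
  Rabs (M * y * (x * v - c * u) / 6) <= y * (u^2 + v^2 + 1).
Proof.
  intros hM hy hx hc.
  assert (A : Rabs (x * v - c * u) <= Rabs v + Rabs u).
  { eapply Rle_trans; [apply Rabs_sub_le|].
    assert (Rabs (x * v) <= 1 * Rabs v) by (apply Rabs_mult_le; [apply Rabs_le; lra|lra]).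
    assert (Rabs (c * u) <= 1 * Rabs u) by (apply Rabs_mult_le; [apply Rabs_le; lra|lra]). lra. }
  assert (Au := two_abs_le u 1 ltac:(lra)). assert (Av := two_abs_le v 1 ltac:(lra)).
  replace (M * y * (x * v - c * u) / 6) with ((M * y / 6) * (x * v - c * u)) by field.
  rewrite Rabs_mult, (Rabs_right (M * y / 6)) by nra.
  assert (0 <= Rabs (x * v - c * u)) by apply Rabs_pos.
  assert (M * y / 6 * Rabs (x * v - c * u) <= y / 3 * (Rabs v + Rabs u)) by (apply Rmult_le_compat; nra).
  nra.
Qed.

(** * The solution g_d for a fixed large d *)

(* s(x) = sqrt(1-x^2), which becomes sin t under x = cos t. *)
Definition sine_of (x : R) : R := sqrt (1 - x^2).

Lemma sine_of_pos x : -1 < x < 1 -> 0 < sine_of x.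
Proof. intros; unfold sine_of; apply sqrt_lt_R0; nra. Qed.

Lemma sine_of_sq x : -1 < x < 1 -> sine_of x ^ 2 = 1 - x^2.
Proof. intros; unfold sine_of; rewrite pow2_sqrt; nra. Qed.

Lemma sine_of_deriv x : -1 < x < 1 -> derivable_pt_lim sine_of x (- x / sine_of x).
Proof.
  intros hx. unfold sine_of. eapply d_ext; [der; nra|]. fold (sine_of x).
  assert (sine_of x > 0) by (apply sine_of_pos; auto). simpl. field. lra.
Qed.

Lemma sine_of_cont : cont_open sine_of.
Proof. intros x hx; apply derivable_continuous_pt. exists (- x / sine_of x). apply sine_of_deriv; auto. Qed.

Section FixedSolution.

(* A solution G of the equation with derivative g1; the flux
   Q = exp(x/d) (1-x^2) g1 has derivative p1, and the equation, solved for p1,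
   reads p1 = exp(x/d) (G + (1-x^2) s) / (1-x^2). *)
Variable d : R.
Variables G g1 p1 : R -> R.

Definition flux (x : R) : R := exp (x / d) * ((1 - x ^ 2) * g1 x).

Hypothesis d_large : 2 <= d.
Hypothesis G_deriv : forall x, -1 < x < 1 -> derivable_pt_lim G x (g1 x).
Hypothesis flux_deriv : forall x, -1 < x < 1 -> derivable_pt_lim flux x (p1 x).
Hypothesis equation : forall x, -1 < x < 1 ->
  p1 x = (exp (x/d) * G x + (1 - x^2) * sine_of x * exp (x/d)) / (1 - x^2).

(* Deviations from the limit profile G = -s/2. *)
Definition dev (x : R) : R := G x + sine_of x / 2.
Definition u (x : R) : R := dev x / sine_of x.
Definition v (x : R) : R := sine_of x * g1 x - x / 2.

(* Flux of the limit profile, and the energy functional F = (Q - Q0) dev. *)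
Definition flux0 (x : R) : R := exp (x / d) * (x * sine_of x) / 2.
Definition energy_flux (x : R) : R := (flux x - flux0 x) * dev x.
Definition energy_density (x : R) : R :=
  exp (x/d) * (u x ^ 2 - x * (1 - x^2) * u x / (2 * d) + v x ^ 2).

(* The integrands of D and N after the substitution x = cos t. *)
Definition den_integrand (x : R) : R := (1 - x^2) * h_d G x * M_d d x.
Definition num_integrand (x : R) : R := x * (1 - x^2) * h_d G x * M_d d x.

Lemma G_cont : cont_open G.
Proof. intros x hx. apply derivable_continuous_pt. exists (g1 x). apply G_deriv; auto. Qed.

(* g1 = Q / (exp(x/d) (1-x^2)) is continuous since Q is differentiable. *)
Lemma g1_cont : cont_open g1.
Proof.
  intros x hx.
  apply (continuity_pt_locally _ (fun y => flux y / (exp (y/d) * (1 - y^2))) x (Rmin (x+1) (1-x))).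
  - apply Rmin_pos; lra.
  - intros y hy. assert (hm1 := Rmin_l (x+1) (1-x)). assert (hm2 := Rmin_r (x+1) (1-x)).
    apply Rabs_def2 in hy. unfold flux. assert (0 < exp (y/d)) by apply exp_pos. field. split; nra.
  - cont; try lra.
    + apply derivable_continuous_pt. exists (p1 x). apply flux_deriv; auto.
    + apply Rgt_not_eq, Rmult_lt_0_compat; [apply exp_pos|nra].
Qed.

Lemma u_cont : cont_open u.
Proof.
  intros x hx. assert (sine_of x > 0) by (apply sine_of_pos; auto).
  unfold u, dev. cont; try lra; first [apply sine_of_cont | apply G_cont]; lra.
Qed.

Lemma v_cont : cont_open v.
Proof. intros x hx. unfold v. cont; try lra; first [apply sine_of_cont | apply g1_cont]; lra. Qed.

Lemma u2_cont : cont_open (fun x => u x ^ 2).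
Proof. intros x hx; apply (c_pow u), u_cont; auto. Qed.

Lemma dev_deriv x : -1 < x < 1 -> derivable_pt_lim dev x (g1 x - x / (2 * sine_of x)).
Proof.
  intros hx. unfold dev. eapply d_ext.
  - apply (d_plus G (fun y => sine_of y / 2)); [apply G_deriv; auto|]. der; [apply sine_of_deriv; auto|lra].
  - assert (sine_of x > 0) by (apply sine_of_pos; auto). unfold Rsqr. field. lra.
Qed.

Lemma flux0_deriv x : -1 < x < 1 ->
  derivable_pt_lim flux0 x (exp (x/d) * (x * sine_of x / (2*d) + (1 - 2 * x^2) / (2 * sine_of x))).
Proof.
  intros hx. unfold flux0. eapply d_ext; [der; try lra; apply sine_of_deriv; auto|].
  assert (hs := sine_of_pos x hx). assert (hs2 := sine_of_sq x hx).
  unfold Rsqr; simpl INR; simpl pred. field_sqrt hs2. all: nonzero.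
Qed.

Lemma energy_flux_deriv x : -1 < x < 1 -> derivable_pt_lim energy_flux x (energy_density x).
Proof.
  intros hx. unfold energy_flux. eapply d_ext.
  - apply (d_mult (fun y => flux y - flux0 y) dev); [|apply dev_deriv; auto].
    apply (d_minus flux flux0); [apply flux_deriv; auto|apply flux0_deriv; auto].
  - rewrite equation by auto.
    assert (hs := sine_of_pos x hx). assert (hs2 := sine_of_sq x hx).
    unfold energy_density, u, v, flux, flux0, dev.
    assert (0 < 1 - x^2) by nra. assert (0 < sine_of x * d) by nra.
    field_sqrt hs2. all: try (split; lra). all: nonzero.
Qed.

Lemma energy_density_cont : cont_open energy_density.
Proof.
  intros x hx. unfold energy_density.
  cont; try lra; first [apply u_cont | apply v_cont]; lra.
Qed.

Lemma energy_flux_eq x : -1 < x < 1 -> energy_flux x = exp (x/d) * (1 - x^2) * (u x * v x).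
Proof.
  intros hx. assert (hs := sine_of_pos x hx). assert (hs2 := sine_of_sq x hx).
  unfold energy_flux, flux, flux0, u, v, dev. field_sqrt hs2. all: nonzero.
Qed.

Lemma energy_density_lower x : -1 < x < 1 -> energy_density x >= u x ^ 2 / 4 - 1 / (4 * d^2).
Proof.
  intros hx. destruct (exp_weight_bounds x d d_large ltac:(lra)) as [hM _].
  unfold energy_density.
  replace (u x ^ 2 - x * (1 - x ^ 2) * u x / (2 * d) + v x ^ 2) with
    (u x ^ 2 - (x * (1 - x ^ 2) / (2 * d)) * u x + v x ^ 2) by (field; lra).
  apply coercive_lower; auto.
  replace ((x * (1 - x ^ 2) / (2 * d)) ^ 2) with ((x * (1 - x^2))^2 * (1 / (4 * d^2))) by (field; lra).
  assert (0 < 1 / (4 * d^2)) by (apply Rdiv_lt_0_compat; nra).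
  assert ((x * (1 - x^2))^2 <= 1) by (assert (0 < 1 - x^2) by nra; nra).
  nra.
Qed.

Hypothesis u2_int : int_bounded (fun x => u x ^ 2).
Hypothesis v2_int : int_bounded (fun x => v x ^ 2).

Lemma uv_int : int_bounded (fun x => u x ^ 2 + v x ^ 2).
Proof.
  apply (int_bounded_dom _ _ _ 1 1 0 u2_int v2_int); try lra.
  - intros x hx. apply (c_plus (fun y => u y ^ 2) (fun y => v y ^ 2)); [apply u2_cont; auto|].
    apply (c_pow v), v_cont; auto.
  - intros x hx. split; nra.
Qed.

(* Energy estimate: integrating F' >= u^2/4 - 1/(4d^2) between points where
   the flux F = exp(x/d)(1-x^2) u v is small gives  int u^2 <= 2/d^2. *)
Lemma energy_estimate a b (pr : Riemann_integrable (fun x => u x ^ 2) a b) :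
  -1 < a -> a <= b -> b < 1 -> RiemannInt pr <= 2 / d^2.
Proof.
  intros ha hab hb.
  assert (HF : forall x, -1 < x < 1 -> Rabs (energy_flux x) <= (1 - x^2) * (u x ^ 2 + v x ^ 2)).
  { intros x hx. rewrite energy_flux_eq by auto.
    destruct (exp_weight_bounds x d d_large ltac:(lra)) as [hM _]. apply flux_bound; auto; nra. }
  apply le_eps. intros eps heps.
  destruct (small_near_left _ _ uv_int HF (eps/8) ltac:(lra) a ha) as [a' [ha' Fa]].
  destruct (small_near_right _ _ uv_int HF (eps/8) ltac:(lra) b hb) as [b' [hb' Fb]].
  pose (pu := RI_open _ a' b' ltac:(lra) ltac:(lra) ltac:(lra) u2_cont).
  assert (M1 := RiemannInt_subinterval_le _ a' a b b' pr pu ltac:(lra) hab ltac:(lra)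
                  ltac:(intros; apply u2_cont; lra) ltac:(intros; nra)).
  pose (pF := RI_open _ a' b' ltac:(lra) ltac:(lra) ltac:(lra) energy_density_cont).
  assert (EF := FTC_segment energy_flux energy_density a' b' ltac:(lra)
     ltac:(intros; apply energy_flux_deriv; lra) ltac:(intros; apply energy_density_cont; lra) pF).
  pose (pc := RI_open (fun _ => - (1 / (4 * d^2))) a' b' ltac:(lra) ltac:(lra) ltac:(lra) (fun x _ => c_const _ x)).
  assert (Ec : RiemannInt pc = - (1 / (4 * d^2)) * (b' - a')) by apply RiemannInt_P15.
  pose (pl := RiemannInt_P10 (1/4) pc pu).
  assert (Le := RiemannInt_le _ _ a' b' pl pF ltac:(lra)
     ltac:(intros x hx; cbv beta; assert (Fl := energy_density_lower x ltac:(lra)); lra)).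
  rewrite (RiemannInt_P13 pc pu), Ec in Le.
  apply Rabs_def2 in Fa, Fb.
  assert (0 < 1 / (4 * d^2)) by (apply Rdiv_lt_0_compat; nra).
  assert ((b' - a') * (1 / (4 * d^2)) <= 2 * (1 / (4 * d^2))) by (apply Rmult_le_compat_r; lra).
  replace (2 / d^2) with (8 * (1 / (4 * d^2))) by (field; lra).
  lra.
Qed.

Lemma h_d_eq x : -1 < x < 1 -> h_d G x = u x - 1/2.
Proof.
  intros hx. assert (hs := sine_of_pos x hx).
  unfold h_d, u, dev. fold (sine_of x). field. lra.
Qed.

Lemma h_d_cont : cont_open (h_d G).
Proof.
  intros x hx. unfold h_d. cont; try apply G_cont; try nra.
  apply Rgt_not_eq, sqrt_lt_R0; nra.
Qed.

Lemma dominating_int : int_bounded (fun x => u x ^ 2 + 2).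
Proof.
  apply (int_bounded_dom _ _ _ 1 0 2 u2_int u2_int); try lra.
  - intros x hx. apply (c_plus (fun y => u y ^ 2) (fun _ => 2)); [apply u2_cont; auto|apply c_const].
  - intros x hx. assert (0 <= u x ^ 2) by apply pow2_ge_0. lra.
Qed.

Lemma weighted_cont y : cont_open y -> cont_open (fun x => y x * h_d G x * M_d d x).
Proof.
  intros hy x hx. apply (c_mult (fun x => y x * h_d G x)); [apply (c_mult y); [apply hy|apply h_d_cont]; auto|].
  unfold M_d. cont; lra.
Qed.

(* If |y| <= 1, the integrand exp(x/d) y (u - 1/2) is dominated by u^2 + 2,
   hence improperly integrable. *)
Lemma weighted_integrand_improper y : cont_open y -> (forall x, -1 < x < 1 -> Rabs (y x) <= 1) ->
  exists l, improper_int (fun x => y x * h_d G x * M_d d x) (-1) 1 l.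
Proof.
  intros hy hy1.
  apply (improper_of_dominated _ _ (weighted_cont y hy) dominating_int).
  intros x hx. rewrite h_d_eq by auto. unfold M_d.
  replace (y x * (u x - 1 / 2) * exp (x / d)) with (exp (x / d) * y x * (u x - 1/2)) by ring.
  apply integrand_bound; auto. apply exp_weight_bounds; lra.
Qed.

(* Denominator: D = -2/3 + O(1/d), comparing with the primitive of -(1-x^2)/2. *)
Definition den_primitive (x : R) : R := -(1/2) * (x - x^3/3).

Lemma den_estimate : exists lD, improper_int den_integrand (-1) 1 lD /\ Rabs (lD - (- 2 / 3)) <= 6 / d.
Proof.
  destruct (weighted_integrand_improper (fun x => 1 - x^2)) as [lD hD].
  { intros x hx; cont. }
  { intros x hx. apply Rabs_le; nra. }
  exists lD. split; [exact hD|].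
  replace (- 2 / 3) with (den_primitive 1 - den_primitive (-1)) by (unfold den_primitive; field).
  replace (6 / d) with (2 * (2 / d) + d * (2 / d^2)) by (field; lra).
  apply (improper_int_approx den_integrand lD den_primitive (fun _ => 0) (fun x => -(1/2) * (1 - x^2))
           (fun x => u x ^ 2) (fun x => u x ^ 2)); auto.
  - apply (weighted_cont (fun x => 1 - x^2)). intros x hx; cont.
  - intros x hx; cont; lra.
  - apply u2_cont.
  - intros x hx. rewrite Rabs_R0. apply Rmult_le_pos; [nra|apply pow2_ge_0].
  - intros x hx. unfold den_primitive. eapply d_ext; [der; lra|]. unfold Rsqr; simpl. field.
  - intros x hx. unfold den_integrand, M_d. rewrite h_d_eq by auto.
    destruct (exp_weight_bounds x d d_large ltac:(lra)) as [hM [hM1 _]].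
    replace ((1 - x ^ 2) * (u x - 1 / 2) * exp (x / d) - - (1 / 2) * (1 - x ^ 2)) with
      (exp (x / d) * (1 - x^2) * u x - (1 - x^2) * (exp (x / d) - 1) / 2) by field.
    apply den_error_bound; auto; nra.
  - apply Rlt_le, Rdiv_lt_0_compat; lra.
  - lra.
  - apply energy_estimate.
  - unfold den_primitive; cont; lra.
  - unfold den_primitive; cont; lra.
Qed.

(* Numerator: the integrand is the derivative of num_primitive + boundary_term
   up to num_error = O(1/d^2 + u^2), and the boundary term vanishes at +-1. *)
Definition num_primitive (x : R) : R :=
  -(1/2)*(x^2/2 - x^4/4) + (1/(12*d) - 1/(2*d))*(x^3/3 - x^5/5).
Definition boundary_term (x : R) : R :=
  (flux x - flux0 x) * (x * sine_of x / 6) - exp (x / d) * sine_of x * (1 - 2 * x^2) / 6 * dev x.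
Definition num_error (x : R) : R :=
  x^2*(1-x^2)*(exp(x/d) - 1)/(12*d) + (1-x^2)*(1-2*x^2)*exp(x/d)*u x/(6*d)
  - x*(1-x^2)*(exp(x/d) - 1 - x/d)/2.

(* In terms of the deviations, the boundary term is O((1-x^2)(u^2 + v^2 + 1)). *)
Lemma boundary_term_eq x : -1 < x < 1 ->
  boundary_term x = exp (x/d) * (1 - x^2) * (x * v x - (1 - 2 * x^2) * u x) / 6.
Proof.
  intros hx. assert (hs := sine_of_pos x hx). assert (hs2 := sine_of_sq x hx).
  unfold boundary_term, flux, flux0, u, v, dev. field_sqrt hs2. all: nonzero.
Qed.

Lemma num_approx_deriv x : -1 < x < 1 ->
  derivable_pt_lim (fun y => boundary_term y + num_primitive y) x (num_integrand x - num_error x).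
Proof.
  intros hx. assert (hs := sine_of_pos x hx). assert (hs2 := sine_of_sq x hx).
  unfold boundary_term, num_primitive. eapply d_ext.
  - der; try (apply flux_deriv; auto); try (apply flux0_deriv; auto); try (apply dev_deriv; auto);
      try (apply sine_of_deriv; auto); lra.
  - rewrite equation by auto.
    unfold num_integrand, num_error, h_d, M_d, u, flux, flux0, dev. fold (sine_of x).
    unfold Rsqr. simpl INR. simpl pred.
    assert (0 < sine_of x * d) by nra.
    assert (0 < sine_of x * d^2 * (1 - x^2)) by (assert (0 < 1 - x^2) by nra; apply Rmult_lt_0_compat; nra).
    field_sqrt hs2. all: repeat split; nonzero.
Qed.

Lemma num_estimate : exists lN, improper_int num_integrand (-1) 1 lN /\
  Rabs (lN - (- 1 / (9 * d))) <= 5 / d^2.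
Proof.
  destruct (weighted_integrand_improper (fun x => x * (1 - x^2))) as [lN hN].
  { intros x hx; cont. }
  { intros x hx. assert (0 <= 1 - x^2 <= 1) by nra. apply Rabs_le; split; nra. }
  exists lN. split; [exact hN|].
  assert (hd2 : 0 < 1 / d^2) by (apply Rdiv_lt_0_compat; nra).
  assert (cN : cont_open num_integrand) by (apply (weighted_cont (fun x => x * (1 - x^2))); intros x hx; cont).
  replace (- 1 / (9 * d)) with (num_primitive 1 - num_primitive (-1)) by (unfold num_primitive; field; lra).
  apply Rle_trans with (2 * (2 / d^2) + 1/6 * (2 / d^2));
    [|replace (2 / d^2) with (2 * (1 / d^2)) by (field; lra);
      replace (5 / d^2) with (5 * (1 / d^2)) by (field; lra); lra].
  apply (improper_int_approx num_integrand lN num_primitive boundary_term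
           (fun x => num_integrand x - num_error x) (fun x => u x ^ 2)
           (fun x => u x ^ 2 + v x ^ 2 + 1)); auto.
  - intros x hx. apply (c_minus num_integrand num_error); auto.
    unfold num_error. cont; try (apply u_cont; auto); lra.
  - apply u2_cont.
  - apply (int_bounded_dom _ _ _ 1 1 1 u2_int v2_int); try lra.
    + intros x hx. apply (c_plus (fun y => u y ^ 2 + v y ^ 2) (fun _ => 1)); [|apply c_const].
      apply uv_int; auto.
    + intros x hx. assert (0 <= u x ^ 2) by apply pow2_ge_0. assert (0 <= v x ^ 2) by apply pow2_ge_0. lra.
  - intros x hx. rewrite boundary_term_eq by auto.
    destruct (exp_weight_bounds x d d_large ltac:(lra)) as [hM _]. apply boundary_term_bound; auto; nra.
  - apply num_approx_deriv.
  - intros x hx. replace (num_integrand x - (num_integrand x - num_error x)) with (num_error x) by ring.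
    destruct (exp_weight_bounds x d d_large ltac:(lra)) as [hM [hM1 hM2]].
    replace (1 / 6 * u x ^ 2) with (u x ^ 2 / 6) by field.
    apply num_error_bound; auto; nra.
  - lra.
  - lra.
  - apply energy_estimate.
  - unfold num_primitive; cont; lra.
  - unfold num_primitive; cont; lra.
Qed.

End FixedSolution.

Lemma Rpower_three_halves y : 0 < y -> Rpower y (3/2) = y * sqrt y.
Proof.
  intros hy. replace (3/2) with (1 + /2) by field. rewrite Rpower_plus, Rpower_1, Rpower_sqrt; auto.
Qed.

(* Unpacking solves_gd: the equation solved for p1, and the integrability of
   u^2 <= 2 h^2 + 1/2 and v^2 <= 2 (s g')^2 + 1/2 from membership in V. *)
Lemma solves_gd_data d G : 2 <= d -> solves_gd d G -> exists g1 p1,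
  (forall x, -1 < x < 1 -> derivable_pt_lim G x (g1 x)) /\
  (forall x, -1 < x < 1 -> derivable_pt_lim (flux d g1) x (p1 x)) /\
  (forall x, -1 < x < 1 ->
     p1 x = (exp (x/d) * G x + (1 - x^2) * sine_of x * exp (x/d)) / (1 - x^2)) /\
  int_bounded (fun x => u G x ^ 2) /\ int_bounded (fun x => v g1 x ^ 2).
Proof.
  intros hd [g1 [p1 [HG [[[l1 V1] [l2 V2]] HE]]]].
  assert (HQ : forall x, -1 < x < 1 -> derivable_pt_lim (flux d g1) x (p1 x)) by apply HE.
  assert (Hp : forall x, -1 < x < 1 ->
     p1 x = (exp (x/d) * G x + (1 - x^2) * sine_of x * exp (x/d)) / (1 - x^2)).
  { intros x hx. destruct (HE x hx) as [_ E]. rewrite Rpower_three_halves in E by nra.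
    fold (sine_of x) in E. assert (0 < 1 - x^2) by nra.
    apply (Rmult_eq_reg_l (1 - x^2)); [|lra]. field_simplify; lra. }
  exists g1, p1. do 3 (split; [assumption|]).
  assert (cG := G_cont G g1 HG). assert (cg1 := g1_cont d g1 p1 hd HQ).
  assert (B1 : int_bounded (fun x => (G x / sqrt (1 - x ^ 2)) ^ 2)).
  { apply (int_bounded_of_improper _ l1); auto; [|intros; apply pow2_ge_0].
    intros x hx. cont; try (apply cG; auto); try nra. apply Rgt_not_eq, sqrt_lt_R0; nra. }
  assert (B2 : int_bounded (fun x => (sqrt (1 - x ^ 2) * g1 x) ^ 2)).
  { apply (int_bounded_of_improper _ l2); auto; [|intros; apply pow2_ge_0].
    intros x hx. cont; try (apply cg1; auto); nra. }
  split.
  - apply (int_bounded_dom _ _ _ 2 0 (1/2) B1 B1); try lra.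
    + intros x hx. apply (c_pow (u G)), (u_cont G g1 HG); auto.
    + intros x hx. split; [apply pow2_ge_0|].
      unfold u, dev, sine_of. assert (0 < sqrt (1 - x^2)) by (apply sqrt_lt_R0; nra).
      replace ((G x + sqrt (1 - x ^ 2) / 2) / sqrt (1 - x ^ 2)) with (G x / sqrt (1 - x ^ 2) + 1/2)
        by (field; lra).
      assert (0 <= (G x / sqrt (1 - x ^ 2) - 1/2)^2) by apply pow2_ge_0. nra.
  - apply (int_bounded_dom _ _ _ 2 0 (1/2) B2 B2); try lra.
    + intros x hx. apply (c_pow (v g1)), (v_cont d g1 p1 hd HQ); auto.
    + intros x hx. split; [apply pow2_ge_0|]. unfold v, sine_of.
      assert (0 <= (sqrt (1 - x ^ 2) * g1 x + x/2)^2) by apply pow2_ge_0. nra.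
Qed.

Lemma c2_integrals d G : 2 <= d -> solves_gd d G -> exists N Dn,
  improper_int (c2_num_integrand d G) 0 PI N /\ improper_int (c2_den_integrand d G) 0 PI Dn /\
  Rabs (N - (- 1 / (9 * d))) <= 5 / d^2 /\ Rabs (Dn - (- 2 / 3)) <= 6 / d.
Proof.
  intros hd hsol.
  destruct (solves_gd_data d G hd hsol) as [g1 [p1 [HG [HQ [Hp [Bu Bv]]]]]].
  destruct (num_estimate d G g1 p1 hd HG HQ Hp Bu Bv) as [N [hN eN]].
  destruct (den_estimate d G g1 p1 hd HG HQ Hp Bu Bv) as [Dn [hD eD]].
  assert (sin_sq : forall t, 1 - cos t ^ 2 = sin t ^ 2)
    by (intros t; assert (E := sin2_cos2 t); unfold Rsqr in E; simpl; lra).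
  exists N, Dn. repeat split; auto.
  - apply (improper_ext (fun t => num_integrand d G (cos t) * sin t)).
    + intros t. unfold num_integrand, c2_num_integrand. rewrite sin_sq. ring.
    + apply improper_cos_substitution; auto.
      apply (weighted_cont d G g1 hd HG (fun x => x * (1 - x^2))). intros x hx; cont.
  - apply (improper_ext (fun t => den_integrand d G (cos t) * sin t)).
    + intros t. unfold den_integrand, c2_den_integrand. rewrite sin_sq. ring.
    + apply improper_cos_substitution; auto.
      apply (weighted_cont d G g1 hd HG (fun x => 1 - x^2)). intros x hx; cont.
Qed.

Lemma ratio_estimate d N Dn : 18 <= d ->
  Rabs (N - (- 1 / (9 * d))) <= 5 / d^2 -> Rabs (Dn - (- 2 / 3)) <= 6 / d ->
  Rabs (N / Dn - 1 / (6 * d)) <= 18 / d^2.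
Proof.
  intros hd hN hD.
  apply Rabs_le_inv in hN. apply Rabs_le_inv in hD.
  assert (h6 : 6 / d <= 1/3) by (apply (Rmult_le_reg_l d); [lra|]; field_simplify; lra).
  assert (hl : Dn <= -1/3) by lra.
  assert (E : N / Dn - 1 / (6 * d) = (6 * d * N - Dn) / (6 * d * Dn)) by (field; lra).
  assert (B1 : Rabs (6 * d * N - Dn) <= 36 / d).
  { replace (6 * d * N - Dn) with (6 * d * (N - (- 1 / (9 * d))) - (Dn - (-2/3))) by (field; lra).
    assert (6 * d * (5 / d^2) = 30 / d) by (field; lra).
    assert (6 * d * (N - (- 1 / (9 * d))) <= 6 * d * (5 / d^2)) by (apply Rmult_le_compat_l; lra).
    assert (6 * d * (- (5 / d^2)) <= 6 * d * (N - (- 1 / (9 * d)))) by (apply Rmult_le_compat_l; lra).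
    replace (36 / d) with (30 / d + 6 / d) by (field; lra). apply Rabs_le; lra. }
  rewrite E. unfold Rdiv at 1. rewrite Rabs_mult, Rabs_inv, (Rabs_left (6 * d * Dn)) by nra.
  assert (/ - (6 * d * Dn) <= / (2 * d)) by (apply Rinv_le_contravar; nra).
  assert (0 < / - (6 * d * Dn)) by (apply Rinv_0_lt_compat; nra).
  apply Rle_trans with ((36 / d) * / (2 * d)); [apply Rmult_le_compat; auto; try lra; apply Rabs_pos|].
  right. field. lra.
Qed.

Theorem propositionA2 (g : R -> R -> R)
  (Hg : forall d, d > 0 -> solves_gd d (g d)) :
  forall eps, eps > 0 -> exists D, D > 0 /\
    forall d, d > D ->
      exists N Dn,
        improper_int (c2_num_integrand d (g d)) 0 PI N /\
        improper_int (c2_den_integrand d (g d)) 0 PI Dn /\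
        Rabs (N / Dn - 1 / (6 * d)) <= eps / d.
Proof.
  intros eps heps. assert (h18 : 0 < 18 / eps) by (apply Rdiv_lt_0_compat; lra).
  exists (18 + 18 / eps). split; [lra|]. intros d hd.
  destruct (c2_integrals d (g d) ltac:(lra) (Hg d ltac:(lra))) as [N [Dn [hN [hD [eN eD]]]]].
  exists N, Dn. repeat split; auto.
  (* the error 18/d^2 is at most eps/d because d >= 18/eps *)
  apply Rle_trans with (18 / d^2); [apply ratio_estimate; auto; lra|].
  replace (18 / d^2) with ((18 / d) / d) by (field; lra).
  apply Rmult_le_compat_r; [apply Rlt_le, Rinv_0_lt_compat; lra|].
  apply (Rmult_le_reg_l d); [lra|]. replace (d * (18 / d)) with 18 by (field; lra).
  apply (Rmult_le_reg_r (/ eps)); [apply Rinv_0_lt_compat; lra|].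
  replace (d * eps * / eps) with d by (field; lra). unfold Rdiv in hd. lra.
Qed.
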